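(* Let $r\ge 2$ and let $F$ be a graph with chromatic number $\chi(F)=r+1$ that has a color-critical edge; let $t=|V(F)|$. There exists $\varepsilon_0>0$ such that for every $0<\varepsilon<\varepsilon_0$ there is $n_0$ with the following property. Let $G$ be an $F$-free graph on $n\ge n_0$ vertices, and let $U_1,\dots,U_r$ be pairwise disjoint subsets of $V(G)$ with $|U_i|\ge rt\varepsilon n+t$ for every $i$, such that for every $i$, every $v\in U_i$ and every $j\ne i$ we have $|N_G(v)\cap U_j|\ge |U_j|-\varepsilon n$. Then: (i) each of $U_1,\dots,U_r$ is an independent set in $G$; (ii) for every vertex $x\in V(G)\setminus(U_1\cup\dots\cup U_r)$ there is an index $i\in\{1,\dots,r\}$ such that $x$ has at most $\varepsilon r t n$ neighbors in $U_i$.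
   Context: An edge $e$ of a graph $F$ is color-critical if $\chi(F-e)<\chi(F)$. A graph is $F$-free if it has no subgraph isomorphic to $F$. $N_G(v)$ denotes the set of neighbors of $v$ in $G$. The condition on $U_1,\dots,U_r$ says that the $r$-partite subgraph of $G$ with parts $U_1,\dots,U_r$ is ''$\varepsilon$-almost complete'': every vertex of a part has at most $\varepsilon n$ non-neighbors in each other part. *)

From mathcomp Require Import all_boot all_order all_algebra.
From mathcomp Require Import reals.
Set Implicit Arguments. Unset Strict Implicit. Unset Printing Implicit Defensive.

Definition simple_graph (T : finType) (e : rel T) : Prop :=
  symmetric e /\ irreflexive e.

Definition colorable (T : finType) (e : rel T) (k : nat) : Prop :=
  exists c : {ffun T -> 'I_k}, forall x y, e x y -> c x != c y.

Definition chromatic_number_eq (T : finType) (e : rel T) (k : nat) : Prop :=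
  colorable e k /\ forall k', k' < k -> ~ colorable e k'.

Definition del_edge (T : finType) (e : rel T) (u v : T) : rel T :=
  fun x y => e x y && ~~ (((x == u) && (y == v)) || ((x == v) && (y == u))).

(* {u,v} is a color-critical edge of e : chi(e - uv) < chi(e),
   where chi(e) = k is given. *)
Definition color_critical_edge (T : finType) (e : rel T) (k : nat) (u v : T) : Prop :=
  e u v /\ exists k', k' < k /\ colorable (del_edge e u v) k'.

Definition contains_subgraph (TF TG : finType) (F : rel TF) (G : rel TG) : Prop :=
  exists f : TF -> TG, injective f /\ forall x y, F x y -> G (f x) (f y).

Definition F_free (TF TG : finType) (F : rel TF) (G : rel TG) : Prop :=
  ~ contains_subgraph F G.

Definition nbhd_in (T : finType) (G : rel T) (v : T) (A : {set T}) : {set T} :=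
  [set w in A | G v w].

Definition independent (T : finType) (G : rel T) (A : {set T}) : Prop :=
  forall x y, x \in A -> y \in A -> ~~ G x y.

(* Both claims come from embedding F greedily, one vertex at a time, with every
   vertex a of F sent into a candidate set S a inside U (c a), where c is an
   r-colouring of F - uv.  When a vertex w is placed, each already placed
   F-neighbour lies in a different part, hence has at most eps n non-neighbours
   among the candidates of w; with the at most t - 1 used vertices this forbids
   at most (t - 1)(1 + eps n) candidates, fewer than are available.
   (i) An edge xy inside U_i is used by colouring both u and v with i and
   pinning u to x and v to y.  (ii) A vertex x with more than eps r t n
   neighbours in every part is used by pinning u to x and taking the candidates
   of the F-neighbours of u inside N(x).  Either way G would contain F. *)

From mathcomp Require Import all_boot all_order all_algebra perm.
From mathcomp Require Import reals lra.
Import Order.TTheory GRing.Theory Num.Theory.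
Set Implicit Arguments. Unset Strict Implicit.
Local Open Scope ring_scope.

Definition non_nbhd_in (T : finType) (G : rel T) (z : T) (A : {set T}) : {set T} :=
  A :\: nbhd_in G z A.

Lemma card_non_nbhd_le (R : realDomainType) (T : finType) (G : rel T) z
    (A B : {set T}) (d : R) :
  B \subset A -> #|A|%:R - d <= #|nbhd_in G z A|%:R ->
  #|non_nbhd_in G z B|%:R <= d.
Proof.
move=> sBA degA.
have nbhdA : A :&: nbhd_in G z A = nbhd_in G z A.
  by apply/setIidPr/subsetP => y; rewrite inE => /andP[].
have sub : non_nbhd_in G z B \subset non_nbhd_in G z A.
  apply/subsetP => y; rewrite !inE => /andP[+ yB].
  by rewrite yB (subsetP sBA y yB) /= andbT.
have := cardsID (nbhd_in G z A) A; rewrite nbhdA => cardA.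
have := subset_leq_card sub; rewrite -(ler_nat R) {2}/non_nbhd_in => le_non.
move: degA; rewrite -cardA natrD; lra.
Qed.

Lemma card_bigcup_le (T I : finType) (P : {pred I}) (B : I -> {set T}) :
  (#|\bigcup_(a in P) B a| <= \sum_(a in P) #|B a|)%N.
Proof.
apply: (big_ind2 (fun (X : {set T}) (n : nat) => #|X| <= n)%N) => //.
  by rewrite cards0.
move=> X m Y n leXm leYn; rewrite cardsU; apply: leq_trans (leq_subr _ _) _.
exact: leq_add.
Qed.

Section GreedyEmbedding.

Variables (TF TG : finType) (F : rel TF) (G : rel TG) (S : TF -> {set TG}).

Definition partial_embedding (D : {set TF}) (f : TF -> TG) : Prop :=
  [/\ {in D &, injective f}, {in D, forall a, f a \in S a}
    & {in D &, forall a b, F a b -> G (f a) (f b)}].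

Lemma partial_embedding_full (D : {set TF}) (f : TF -> TG) :
  ~: D = set0 -> partial_embedding D f -> contains_subgraph F G.
Proof.
move=> coD; rewrite -[D]setCK coD setC0 => -[f_inj _ f_hom].
by exists f; split=> [a b|a b]; [apply: f_inj | apply: f_hom]; rewrite inE.
Qed.

Lemma exists_extension_vertex (R : realDomainType) (D : {set TF}) (f : TF -> TG) w (b : R) :
  0 <= b -> {in D, forall a, F w a -> #|non_nbhd_in G (f a) (S w)|%:R <= b} ->
  #|D|%:R * (1 + b) < #|S w|%:R ->
  exists y, [/\ y \in S w, y \notin f @: D & {in D, forall a, F w a -> G (f a) y}].
Proof.
move=> b_ge0 few_non large.
pose B a := if F w a then non_nbhd_in G (f a) (S w) else set0.
pose Bad := f @: D :|: \bigcup_(a in D) B a.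
have card_B : (\sum_(a in D) #|B a|)%:R <= #|D|%:R * b :> R.
  rewrite natr_sum mulr_natl -sumr_const; apply: ler_sum => a aD.
  by rewrite /B; case: ifP => [/(few_non a aD)//|_]; rewrite cards0.
have card_Bad : #|Bad|%:R <= #|D|%:R * (1 + b) :> R.
  have : (#|Bad| <= #|D| + \sum_(a in D) #|B a|)%N.
    rewrite cardsU; apply: leq_trans (leq_subr _ _) _.
    exact: leq_add (leq_imset_card _ _) (card_bigcup_le _ _).
  by rewrite -(ler_nat R) natrD mulrDr mulr1 => /le_trans; apply; rewrite lerD2l.
have /subsetPn[y yS] : ~~ (S w \subset Bad).
  by apply: contraTN large => /subset_leq_card; rewrite -(ler_nat R) -leNgt => /le_trans; apply.
rewrite !inE negb_or => /andP[y_new /bigcupP y_good].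
exists y; split => // a aD Fwa; apply/negPn/negP => nGay; apply: y_good.
by exists a => //; rewrite /B Fwa !inE yS (negbTE nGay).
Qed.

Hypotheses (F_simple : simple_graph F) (G_sym : symmetric G).

Lemma partial_embedding_extend (D : {set TF}) (f : TF -> TG) w y :
  partial_embedding D f -> w \notin D -> y \in S w -> y \notin f @: D ->
  {in D, forall a, F w a -> G (f a) y} ->
  partial_embedding (w |: D) (fun a => if a == w then y else f a).
Proof.
case: F_simple => F_sym F_irr [f_inj f_S f_hom] wD yS y_new y_adj.
have neq_w a : a \in D -> (a == w) = false.
  by move=> aD; apply/negbTE; apply: contraNneq wD => <-.
split.
- move=> a b /setU1P[->|aD] /setU1P[->|bD]; rewrite ?eqxx ?neq_w //.
  + by move=> yfb; rewrite yfb imset_f in y_new.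
  + by move=> fay; rewrite -fay imset_f in y_new.
  + exact: f_inj.
- by move=> a /setU1P[->|aD]; rewrite ?eqxx ?neq_w //; apply: f_S.
- move=> a b /setU1P[->|aD] /setU1P[->|bD]; rewrite ?eqxx ?neq_w //.
  + by rewrite F_irr.
  + by move=> Fwb; rewrite G_sym; apply: y_adj.
  + by move=> Faw; apply: y_adj; rewrite // F_sym.
  + exact: f_hom.
Qed.

Lemma greedy_embedding (R : realDomainType) (D0 : {set TF}) (f0 : TF -> TG) (b : R) :
  0 <= b -> partial_embedding D0 f0 ->
  (forall w a z, w \notin D0 -> F w a -> z \in S a ->
     #|non_nbhd_in G z (S w)|%:R <= b) ->
  (forall w, w \notin D0 -> (#|TF|.-1)%:R * (1 + b) < #|S w|%:R) ->
  contains_subgraph F G.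
Proof.
move=> b_ge0 emb0 few_non large.
suff: forall k D f, (#|~: D| <= k)%N -> D0 \subset D -> partial_embedding D f ->
    contains_subgraph F G by apply; [apply: leqnn | apply: subxx | exact: emb0].
elim=> [|k IHk] D f le_k sD0D emb;
  have [coD|[w]] := set_0Vmem (~: D); try exact: partial_embedding_full coD emb.
  by move: le_k; rewrite leqn0 cards_eq0 => /eqP->; rewrite inE.
rewrite inE => wD.
have wD0 : w \notin D0 by apply: contra wD; apply: (subsetP sD0D).
have [y [yS y_new y_adj]] : exists y, [/\ y \in S w, y \notin f @: D
    & {in D, forall a, F w a -> G (f a) y}].
  case: emb => _ f_S _; apply: (exists_extension_vertex b_ge0).
    by move=> a aD Fwa; apply: few_non wD0 Fwa (f_S a aD).
  apply: le_lt_trans (large w wD0); apply: ler_wpM2r; first by rewrite addr_ge0.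
  rewrite ler_nat -ltnS prednK; last by apply/card_gt0P; exists w.
  by rewrite -cardsT; apply: proper_card; rewrite properT; apply: contraNneq wD => ->.
apply: IHk (partial_embedding_extend emb wD yS y_new y_adj).
- rewrite -ltnS; apply: leq_trans le_k; apply/proper_card/properP; split.
    by apply/subsetP => a; rewrite !inE negb_or => /andP[].
  by exists w; rewrite !inE ?eqxx.
- exact: subset_trans sD0D (subsetUr _ _).
Qed.

End GreedyEmbedding.

Lemma colorable_widen (T : finType) (e : rel T) k k' :
  (k <= k')%N -> colorable e k -> colorable e k'.
Proof.
move=> le_kk' [c c_ok]; exists [ffun x => widen_ord le_kk' (c x)] => x y exy.
rewrite !ffunE; apply: contra (c_ok x y exy) => /eqP/(congr1 val) eq_c.
exact/eqP/val_inj.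
Qed.

Lemma del_edge_coloring_endpoints (T : finType) (e : rel T) k u v (c : T -> 'I_k) :
  ~ colorable e k -> (forall a b, del_edge e u v a b -> c a != c b) -> c u = c v.
Proof.
move=> not_col c_ok; apply/eqP/negPn/negP => c_uv; apply: not_col.
exists [ffun a => c a] => a b eab; rewrite !ffunE.
have [/c_ok //|] := boolP (del_edge e u v a b).
rewrite /del_edge eab negbK => /orP[] /andP[/eqP-> /eqP->] //.
by rewrite eq_sym.
Qed.

Lemma color_critical_edge_coloring (T : finType) (e : rel T) r u v :
  ~ colorable e r -> color_critical_edge e r.+1 u v ->
  forall i : 'I_r, exists c : T -> 'I_r,
    [/\ c u = i, c v = i & forall a b, del_edge e u v a b -> c a != c b].
Proof.
move=> not_col [_ [k [lt_kr col_k]]] i.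
have [c c_ok] := colorable_widen (lt_kr : (k <= r)%N) col_k.
have c_uv := del_edge_coloring_endpoints not_col c_ok.
exists (fun a => tperm (c u) i (c a)); split; rewrite -?c_uv ?tpermL //.
by move=> a b /c_ok; apply: contra => /eqP/perm_inj->.
Qed.

Section AlmostCompleteParts.

Variables (R : realDomainType) (TF TG : finType) (F : rel TF) (G : rel TG).
Variables (r : nat) (U : 'I_r -> {set TG}) (d : R).
Hypotheses (F_simple : simple_graph F) (G_sym : symmetric G) (d_ge0 : 0 <= d).
Hypothesis U_almost_complete : forall i j y, i != j -> y \in U i ->
  #|U j|%:R - d <= #|nbhd_in G y (U j)|%:R.
Variables (u v : TF) (c : TF -> 'I_r).
Hypothesis c_proper : forall a b, del_edge F u v a b -> c a != c b.

Lemma contains_subgraph_of_edge_in_part (i : 'I_r) x y :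
  irreflexive G -> F u v -> c u = i -> c v = i ->
  (forall j, (#|TF|.-1)%:R * (1 + d) < #|U j|%:R) ->
  x \in U i -> y \in U i -> G x y -> contains_subgraph F G.
Proof.
move=> G_irr Fuv cu cv large xU yU Gxy; case: (F_simple) => _ F_irr.
have vu : (v == u) = false by apply/negbTE; apply: contraTneq Fuv => ->; rewrite F_irr.
have yx : (y == x) = false by apply/negbTE; apply: contraTneq Gxy => ->; rewrite G_irr.
pose S a := if a == u then [set x] else if a == v then [set y] else U (c a).
have SU a : S a \subset U (c a).
  rewrite /S; case: ifP => [/eqP->|_]; first by rewrite sub1set cu.
  by case: ifP => [/eqP->|_] //; rewrite sub1set cv.
apply: (greedy_embedding (S := S) F_simple G_sym (D0 := [set u; v])
          (f0 := fun a => if a == u then x else y) d_ge0).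
- split.
  + by move=> a b; rewrite !inE => /orP[]/eqP-> /orP[]/eqP->; rewrite ?eqxx ?vu // => /eqP;
      rewrite ?yx // eq_sym yx.
  + by move=> a; rewrite !inE => /orP[]/eqP->; rewrite /S ?eqxx ?vu inE eqxx.
  + by move=> a b; rewrite !inE => /orP[]/eqP-> /orP[]/eqP->; rewrite ?eqxx ?vu ?F_irr // G_sym.
- move=> w a z; rewrite !inE negb_or => /andP[wu wv] Fwa /(subsetP (SU a)) zU.
  rewrite /S (negbTE wu) (negbTE wv); apply: card_non_nbhd_le (subxx _) _.
  apply: U_almost_complete zU; rewrite eq_sym; apply: c_proper.
  by rewrite /del_edge Fwa (negbTE wu) (negbTE wv).
- by move=> w; rewrite !inE negb_or => /andP[wu wv]; rewrite /S (negbTE wu) (negbTE wv).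
Qed.

Lemma contains_subgraph_of_rich_vertex x :
  (forall j, (#|TF|.-1)%:R * (1 + d) < #|nbhd_in G x (U j)|%:R) ->
  contains_subgraph F G.
Proof.
move=> rich; case: (F_simple) => F_sym F_irr.
pose S a := if a == u then [set x] else if F u a then nbhd_in G x (U (c a)) else U (c a).
have SU a : a != u -> S a \subset U (c a).
  move=> au; rewrite /S (negbTE au); case: ifP => // _.
  by apply/subsetP => y; rewrite inE => /andP[].
apply: (greedy_embedding (S := S) F_simple G_sym (D0 := [set u]) (f0 := fun=> x) d_ge0).
- split; first by move=> a b; rewrite !inE => /eqP-> /eqP->.
    by move=> a; rewrite !inE => /eqP->; rewrite /S eqxx inE.
  by move=> a b; rewrite !inE => /eqP-> /eqP->; rewrite F_irr.
- move=> w a z; rewrite inE => wu.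
  have [-> Fwu|au Fwa] := eqVneq a u.
    rewrite /S eqxx (negbTE wu) F_sym Fwu inE => /eqP->.
    rewrite (_ : non_nbhd_in _ _ _ = set0) ?cards0 //.
    by apply/setP => y; rewrite !inE; case: (y \in _); case: (G x y).
  move/(subsetP (SU a au)) => zU; apply: card_non_nbhd_le (SU w wu) _.
  apply: U_almost_complete zU; rewrite eq_sym; apply: c_proper.
  by rewrite /del_edge Fwa (negbTE wu) (negbTE au) !andbF.
- move=> w; rewrite inE => wu; apply: (lt_le_trans (rich (c w))).
  rewrite ler_nat /S (negbTE wu); case: ifP => // _.
  by apply: subset_leq_card; apply/subsetP => y; rewrite inE => /andP[].
Qed.

End AlmostCompleteParts.

Lemma embedding_budget_lt (R : realFieldType) (k r d : R) :
  0 <= k -> 0 <= d -> 1 <= r -> k * (1 + d) < r * (k + 1) * d + (k + 1).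
Proof.
move=> k_ge0 d_ge0 r_ge1.
have : (k + 1) * d <= r * (k + 1) * d by rewrite -mulrA ler_peMl // mulr_ge0 // addr_ge0.
nra.
Qed.

Lemma embedding_budget_le (R : realFieldType) (k r d : R) :
  0 <= k -> 0 <= d -> 1 <= r -> k < d -> k * (1 + d) <= r * (k + 1) * d.
Proof.
move=> k_ge0 d_ge0 r_ge1 lt_kd.
have : (k + 1) * d <= r * (k + 1) * d by rewrite -mulrA ler_peMl // mulr_ge0 // addr_ge0.
nra.
Qed.

Theorem lemma3p3 (R : realType) (r : nat) (TF : finType) (F : rel TF) :
  (2 <= r)%N ->
  simple_graph F ->
  chromatic_number_eq F r.+1 ->
  (exists u v, color_critical_edge F r.+1 u v) ->
  exists eps0 : R, 0 < eps0 /\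
    forall eps : R, 0 < eps -> eps < eps0 ->
    exists n0 : nat, forall (TG : finType) (G : rel TG) (U : 'I_r -> {set TG}),
      simple_graph G ->
      F_free F G ->
      (n0 <= #|TG|)%N ->
      (forall i j, i != j -> [disjoint U i & U j]) ->
      (forall i, (r * #|TF|)%:R * eps * #|TG|%:R + #|TF|%:R <= #|U i|%:R) ->
      (forall i j v, i != j -> v \in U i ->
         #|U j|%:R - eps * #|TG|%:R <= #|nbhd_in G v (U j)|%:R) ->
      (forall i, independent G (U i)) /\
      (forall x, x \notin \bigcup_(i < r) U i ->
         exists i : 'I_r,
           #|nbhd_in G x (U i)|%:R <= eps * r%:R * #|TF|%:R * #|TG|%:R).
Proof.
move=> r_ge2 F_simple [_ not_col] [u [v crit]].
have coloring := color_critical_edge_coloring (not_col r (ltnSn r)) crit.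
have r_ge1 : 1 <= r%:R :> R by rewrite ler1n ltnW.
set t := #|TF|; set k : R := (t.-1)%:R.
have t_eq : t%:R = k + 1 by rewrite natr1 prednK //; apply/card_gt0P; exists u.
(* Any eps0 works: n0 is only needed to make t < eps n. *)
exists 1; split => // eps eps_gt0 _.
exists (Num.bound (t%:R / eps)) => TG G U [G_sym G_irr] G_free n_large _ U_size U_almost_complete.
set d := eps * #|TG|%:R.
have d_ge0 : 0 <= d by rewrite mulr_ge0 // ltW.
have lt_kd : k < d.
  have := archi_boundP (divr_ge0 (ler0n R t) (ltW eps_gt0)).
  rewrite ltr_pdivrMr // => /lt_le_trans lt_t.
  suff : t%:R < d by lra.
  by apply: lt_t; rewrite mulrC /d ler_pM2l // ler_nat.
have budget_lt_U j : k * (1 + d) < #|U j|%:R.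
  by apply: lt_le_trans (U_size j); rewrite natrM -mulrA t_eq embedding_budget_lt.
split.
- move=> i x y xU yU; apply/negP => Gxy; apply: G_free.
  have [c [cu cv c_ok]] := coloring i.
  exact (contains_subgraph_of_edge_in_part F_simple G_sym d_ge0 U_almost_complete c_ok G_irr crit.1 cu cv budget_lt_U
    xU yU Gxy).
- move=> x _.
  have [c [_ _ c_ok]] := coloring (Ordinal (ltnW r_ge2)).
  have /forallPn[i] : ~~ [forall j, k * (1 + d) < #|nbhd_in G x (U j)|%:R].
    apply/forallP => rich; apply: G_free.
    exact (contains_subgraph_of_rich_vertex F_simple G_sym d_ge0 U_almost_complete c_ok rich).
  rewrite -leNgt => few; exists i; apply: le_trans few _.
  by rewrite -!mulrA mulrCA [eps * _]mulrCA mulrA -/d t_eq embedding_budget_le.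
Qed.
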